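(* Consider the algorithm CAB described in the context, and suppose that for all users $i\in\mathcal U$, all $\boldsymbol{x}\in\mathbb R^d$ and all $s\ge0$, $|\boldsymbol{w}_{i,s}^\top\boldsymbol{x}-\boldsymbol{u}_i^\top\boldsymbol{x}|\le\mathrm{CB}_{i,s}(\boldsymbol{x})$. Let $t\le T$ and let $\boldsymbol{x}_t^*\in\arg\max_{\boldsymbol{x}\in C_t}\boldsymbol{u}_{i_t}^\top\boldsymbol{x}$. Then the instantaneous regret of CAB at round $t$ satisfies \[ r_t\le(3\alpha(T)+2)\Big(\mathbf 1\{\widehat N_{i_t,t}(\boldsymbol{x}_t^* )\ne N_{i_t}(\boldsymbol{x}_t^* )\}+\mathbf 1\{\widehat N_{i_t,t}(\bar{\boldsymbol{x}}_t)\ne N_{i_t}(\bar{\boldsymbol{x}}_t)\}\Big)+2\,\mathrm{CB}_{N_{i_t}(\bar{\boldsymbol{x}}_t),t-1}(\bar{\boldsymbol{x}}_t). \]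
   Context: Model. Users $\mathcal U=\{1,\dots,n\}$ with unknown unit vectors $\boldsymbol{u}_i\in\mathbb R^d$; $N_i(\boldsymbol{x})=\{j:\boldsymbol{u}_j^\top\boldsymbol{x}=\boldsymbol{u}_i^\top\boldsymbol{x}\}$. At round $t$ the learner receives $i_t$ and $C_t=\{\boldsymbol{x}_{t,1},..,\boldsymbol{x}_{t,c_t}\}$ with $\|\boldsymbol{x}_{t,k}\|\le1$, picks $\bar{\boldsymbol{x}}_t\in C_t$, observes $y_t\in[-1,1]$. Regret $r_t=\max_{\boldsymbol{x}\in C_t}\boldsymbol{u}_{i_t}^\top\boldsymbol{x}-\boldsymbol{u}_{i_t}^\top\bar{\boldsymbol{x}}_t$. Algorithm CAB (parameters $\gamma>0$, positive nondecreasing function $\alpha$). Initialize $\boldsymbol{b}_{i,0}=\boldsymbol0$, $M_{i,0}=I_d$; $\boldsymbol{w}_{i,s}=M_{i,s}^{-1}\boldsymbol{b}_{i,s}$, $\mathrm{CB}_{i,s}(\boldsymbol{x})=\alpha(s)\sqrt{\boldsymbol{x}^\top M_{i,s}^{-1}\boldsymbol{x}}$; for nonempty $N\subseteq\mathcal U$, $\boldsymbol{w}_{N,s}=\frac1{|N|}\sum_{j\in N}\boldsymbol{w}_{j,s}$, $\mathrm{CB}_{N,s}(\boldsymbol{x})=\frac1{|N|}\sum_{j\in N}\mathrm{CB}_{j,s}(\boldsymbol{x})$. At round $t$, for any $\boldsymbol{x}$ the estimated neighborhood is $\widehat N_{i_t,t}(\boldsymbol{x})=\{j:|\boldsymbol{w}_{i_t,t-1}^\top\boldsymbol{x}-\boldsymbol{w}_{j,t-1}^\top\boldsymbol{x}|\le\mathrm{CB}_{i_t,t-1}(\boldsymbol{x})+\mathrm{CB}_{j,t-1}(\boldsymbol{x})\}$;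 CAB chooses $\bar{\boldsymbol{x}}_t=\boldsymbol{x}_{t,k_t}$ with $k_t\in\arg\max_k(\boldsymbol{w}_{\widehat N_{i_t,t}(\boldsymbol{x}_{t,k}),t-1}^\top\boldsymbol{x}_{t,k}+\mathrm{CB}_{\widehat N_{i_t,t}(\boldsymbol{x}_{t,k}),t-1}(\boldsymbol{x}_{t,k}))$. Update: if $\mathrm{CB}_{i_t,t-1}(\bar{\boldsymbol{x}}_t)\ge\gamma/4$, only user $i_t$ is updated by $M\leftarrow M+\bar{\boldsymbol{x}}_t\bar{\boldsymbol{x}}_t^\top$, $\boldsymbol b\leftarrow\boldsymbol b+y_t\bar{\boldsymbol{x}}_t$; otherwise this update is applied to every $j\in\widehat N_{i_t,t}(\bar{\boldsymbol{x}}_t)$ with $\mathrm{CB}_{j,t-1}(\bar{\boldsymbol{x}}_t)<\gamma/4$; others unchanged. *)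

From mathcomp Require Import all_boot all_order all_algebra.
Set Implicit Arguments. Unset Strict Implicit. Unset Printing Implicit Defensive.
Import Order.TTheory GRing.Theory Num.Theory.
Local Open Scope ring_scope.

(* An instance of the problem + a run of CAB: parameters alpha, gamma,
   the unknown user vectors u_i, the served user i_t, the context sets C_t,
   the observed rewards y_t and the chosen items xbar_t (rounds t = 1, 2, ...). *)
Record cab_inst (R : rcfType) (d n : nat) := CabInst {
  alpha  : nat -> R;
  gamma  : R;
  uvec   : 'I_n -> 'cV[R]_d;
  user   : nat -> 'I_n;
  ctx    : nat -> seq 'cV[R]_d;
  obs    : nat -> R;
  choice : nat -> 'cV[R]_d }.

Section CAB.
Variables (R : rcfType) (d n : nat) (E : cab_inst R d n).

Definition dotv (u x : 'cV[R]_d) : R := (u^T *m x) 0 0.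

(* per-user statistics (M_i, b_i) *)
Definition cstate := 'I_n -> 'M[R]_d * 'cV[R]_d.

Definition west (st : cstate) (j : 'I_n) : 'cV[R]_d := invmx (st j).1 *m (st j).2.

Definition CBst (st : cstate) (s : nat) (j : 'I_n) (x : 'cV[R]_d) : R :=
  alpha E s * Num.sqrt ((x^T *m invmx (st j).1 *m x) 0 0).

Definition Nhatst (st : cstate) (s : nat) (i : 'I_n) (x : 'cV[R]_d) : {set 'I_n} :=
  [set j | `|dotv (west st i) x - dotv (west st j) x| <= CBst st s i x + CBst st s j x].

Definition upd (t : nat) (prev : cstate) (j : 'I_n) : bool :=
  let x := choice E t in
  let i := user E t in
  if gamma E / 4%:R <= CBst prev t.-1 i x then j == i
  else (j \in Nhatst prev t.-1 i x) && (CBst prev t.-1 j x < gamma E / 4%:R).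

Fixpoint state (s : nat) : cstate :=
  match s with
  | 0 => fun _ => (1%:M, 0)
  | s'.+1 => fun j =>
      let prev := state s' in
      if upd s'.+1 prev j then
        ((prev j).1 + choice E s'.+1 *m (choice E s'.+1)^T,
         (prev j).2 + obs E s'.+1 *: choice E s'.+1)
      else prev j
  end.

Definition w (s : nat) (j : 'I_n) : 'cV[R]_d := west (state s) j.
Definition CB (s : nat) (j : 'I_n) (x : 'cV[R]_d) : R := CBst (state s) s j x.

Definition wN (s : nat) (N : {set 'I_n}) : 'cV[R]_d :=
  (#|N|%:R)^-1 *: \sum_(j in N) w s j.
Definition CBN (s : nat) (N : {set 'I_n}) (x : 'cV[R]_d) : R :=
  (#|N|%:R)^-1 * \sum_(j in N) CB s j x.

Definition Nhat (t : nat) (x : 'cV[R]_d) : {set 'I_n} :=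
  Nhatst (state t.-1) t.-1 (user E t) x.

Definition Ntrue (i : 'I_n) (x : 'cV[R]_d) : {set 'I_n} :=
  [set j | dotv (uvec E j) x == dotv (uvec E i) x].

Definition score (t : nat) (x : 'cV[R]_d) : R :=
  dotv (wN t.-1 (Nhat t x)) x + CBN t.-1 (Nhat t x) x.

End CAB.

From mathcomp Require Import all_boot all_order all_algebra.
From mathcomp Require Import ring lra.
Set Implicit Arguments. Unset Strict Implicit. Unset Printing Implicit Defensive.
Import Order.TTheory GRing.Theory Num.Theory.
Local Open Scope ring_scope.

(* If both neighbourhoods are estimated correctly, the confidence bounds make
   the averaged UCB score an optimistic estimate within [2 CB_N] of the true
   reward, so maximising the score loses at most [2 CB_N(xbar)]. Otherwise the
   regret is at most 2, because all vectors have norm at most one, and this is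
   absorbed by the constant [3 alpha(T) + 2]. *)

Lemma dotvE (R : rcfType) (d : nat) (u x : 'cV[R]_d) :
  dotv u x = \sum_k u k 0 * x k 0.
Proof. by rewrite /dotv !mxE; apply: eq_bigr => k _; rewrite !mxE. Qed.

Lemma dotvZ (R : rcfType) (d : nat) (a : R) (u x : 'cV[R]_d) :
  dotv (a *: u) x = a * dotv u x.
Proof. by rewrite !dotvE mulr_sumr; apply: eq_bigr => k _; rewrite !mxE mulrA. Qed.

Lemma dotv_sum (R : rcfType) (d : nat) (I : finType) (P : {pred I})
    (f : I -> 'cV[R]_d) (x : 'cV[R]_d) :
  dotv (\sum_(j in P) f j) x = \sum_(j in P) dotv (f j) x.
Proof.
rewrite dotvE; under eq_bigr => k _ do rewrite summxE mulr_suml.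
by rewrite exchange_big; apply: eq_bigr => j _; rewrite dotvE.
Qed.

Lemma dotv_AMGM (R : rcfType) (d : nat) (u x : 'cV[R]_d) (c : R) :
  c ^+ 2 = 1 -> 2%:R * c * dotv u x <= dotv u u + dotv x x.
Proof.
move=> c2; rewrite -subr_ge0.
have -> : dotv u u + dotv x x - 2%:R * c * dotv u x =
          \sum_k (u k 0 - c * x k 0) ^+ 2.
  rewrite !dotvE mulr_sumr -big_split /= -sumrB; apply: eq_bigr => k _.
  by rewrite sqrrB exprMn c2 mul1r -mulr_natl; ring.
by apply: sumr_ge0 => k _; apply: sqr_ge0.
Qed.

Lemma norm_dotv_le1 (R : rcfType) (d : nat) (u x : 'cV[R]_d) :
  dotv u u = 1 -> dotv x x <= 1 -> `|dotv u x| <= 1.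
Proof.
move=> u1 x1; have := dotv_AMGM u x (expr1n _ 2).
have := dotv_AMGM u x (_ : (-1) ^+ 2 = 1 :> R).
rewrite sqrrN expr1n u1 => /(_ erefl) hN hP.
rewrite ler_norml; lra.
Qed.

Lemma ler_norm_mean (R : rcfType) (I : finType) (A : {set I}) (f g : I -> R) (c : R) :
  (0 < #|A|)%N -> (forall j, j \in A -> `|f j - c| <= g j) ->
  `|(#|A|%:R)^-1 * \sum_(j in A) f j - c| <= (#|A|%:R)^-1 * \sum_(j in A) g j.
Proof.
move=> A_gt0 fg; have cardA_gt0 : 0 < (#|A|%:R : R) by rewrite ltr0n.
have -> : (#|A|%:R)^-1 * \sum_(j in A) f j - c =
          (#|A|%:R)^-1 * \sum_(j in A) (f j - c).
  by rewrite sumrB sumr_const -mulr_natr; field; rewrite gt_eqF.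
rewrite normrM ger0_norm ?invr_ge0 ?ler0n // ler_pM2l ?invr_gt0 //.
by apply: le_trans (ler_norm_sum _ _ _) (ler_sum _ fg).
Qed.

Section ClusterEstimates.
Variables (R : rcfType) (d n : nat) (E : cab_inst R d n).
Hypothesis alpha_ge0 : forall s, 0 <= alpha E s.
Hypothesis w_conf : forall (i : 'I_n) (x : 'cV[R]_d) (s : nat),
  `|dotv (w E s i) x - dotv (uvec E i) x| <= CB E s i x.

Lemma CB_ge0 s j x : 0 <= CB E s j x.
Proof. exact: mulr_ge0 (alpha_ge0 s) (sqrtr_ge0 _). Qed.

Lemma CBN_ge0 s N x : 0 <= CBN E s N x.
Proof.
by apply: mulr_ge0; [rewrite invr_ge0 ler0n | apply: sumr_ge0 => j _; apply: CB_ge0].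
Qed.

Lemma Ntrue_gt0 i x : (0 < #|Ntrue E i x|)%N.
Proof. by apply/card_gt0P; exists i; rewrite inE. Qed.

Lemma wN_conf s i x :
  `|dotv (wN E s (Ntrue E i x)) x - dotv (uvec E i) x|
    <= CBN E s (Ntrue E i x) x.
Proof.
rewrite /wN /CBN dotvZ dotv_sum; apply: ler_norm_mean => [|j]; first exact: Ntrue_gt0.
by rewrite inE => /eqP <-; apply: w_conf.
Qed.

Lemma score_Ntrue t x : Nhat E t x = Ntrue E (user E t) x ->
  dotv (uvec E (user E t)) x <= score E t x <=
  dotv (uvec E (user E t)) x + 2%:R * CBN E t.-1 (Ntrue E (user E t) x) x.
Proof.
rewrite /score => ->; have := wN_conf t.-1 (user E t) x.
by rewrite ler_norml => /andP[lo hi]; apply/andP; split; lra.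
Qed.

End ClusterEstimates.

Theorem lemma4 (R : rcfType) (d n : nat) (E : cab_inst R d n)
  (Hgamma : 0 < gamma E)
  (Halpha_pos : forall s, 0 < alpha E s)
  (Halpha_mono : forall s s', (s <= s')%N -> alpha E s <= alpha E s')
  (Hu : forall i, dotv (uvec E i) (uvec E i) = 1)
  (Hctx : forall s, (0 < s)%N ->
     ctx E s != [::] /\ (forall x, x \in ctx E s -> dotv x x <= 1))
  (Hobs : forall s, (0 < s)%N -> -1 <= obs E s <= 1)
  (Hchoice : forall s, (0 < s)%N ->
     choice E s \in ctx E s /\
     (forall x, x \in ctx E s -> score E s x <= score E s (choice E s)))
  (Hconf : forall (i : 'I_n) (x : 'cV[R]_d) (s : nat),
     `|dotv (w E s i) x - dotv (uvec E i) x| <= CB E s i x)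
  (t T : nat) (Ht : (1 <= t <= T)%N)
  (xstar : 'cV[R]_d) (Hxs : xstar \in ctx E t)
  (Hmax : forall x, x \in ctx E t ->
     dotv (uvec E (user E t)) x <= dotv (uvec E (user E t)) xstar) :
  dotv (uvec E (user E t)) xstar - dotv (uvec E (user E t)) (choice E t)
  <= (3%:R * alpha E T + 2%:R) *
       ((Nhat E t xstar != Ntrue E (user E t) xstar)%:R
        + (Nhat E t (choice E t) != Ntrue E (user E t) (choice E t))%:R)
     + 2%:R * CBN E t.-1 (Ntrue E (user E t) (choice E t)) (choice E t).
Proof.
have t_gt0 : (0 < t)%N by case/andP: Ht.
have [xb_ctx score_max] := Hchoice t t_gt0.
have alpha_ge0 s : 0 <= alpha E s by apply: ltW.
set i := user E t; set xb := choice E t.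
have regret_le2 : dotv (uvec E i) xstar - dotv (uvec E i) xb <= 2%:R.
  have [_ ctx_norm] := Hctx t t_gt0.
  have := norm_dotv_le1 (Hu i) (ctx_norm _ Hxs).
  have := norm_dotv_le1 (Hu i) (ctx_norm _ xb_ctx).
  by rewrite !ler_norml => /andP[? ?] /andP[? ?]; lra.
have CBN0 := CBN_ge0 alpha_ge0 t.-1 (Ntrue E i xb) xb.
have aT := Halpha_pos T.
have [hat_xs|_] := eqVneq (Nhat E t xstar) (Ntrue E i xstar); last first.
  by case: (_ != _); rewrite /= ?mulr1 ?addr0; nra.
have [hat_xb|_] := eqVneq (Nhat E t xb) (Ntrue E i xb); last first.
  by rewrite /= add0r mulr1; nra.
rewrite /= addr0 mulr0 add0r.
have /andP[opt _] := score_Ntrue Hconf hat_xs.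
have /andP[_ close] := score_Ntrue Hconf hat_xb.
have := score_max _ Hxs; lra.
Qed.
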